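(* Fix $\delta>0$ and any sequence $(T_N)_N$ with $T_N\in2\mathbb N$. For every $\varepsilon>0$ there exists $\ell_0=\ell_0(\varepsilon)\in\mathbb N$ such that for every $N\in\mathbb N$, $$\mathbf P^{T_N}_{N,\delta}(\mu_N<N-\ell_0)=\sum_{\ell=\ell_0+1}^{N}\mathbf P^{T_N}_{N,\delta}(\mu_N=N-\ell)\le\varepsilon,$$ where $\mu_N:=\max\{0\le n\le N: S_n\in T_N\mathbb Z\}$.
   Context: $(S_n)_{n\ge0}$ is the simple symmetric random walk on $\mathbb Z$ started at $0$, with law $\mathbf P$. For $T\in2\mathbb N$, $N\in\mathbb N$, $\delta\in\mathbb R$, the polymer measure $\mathbf P^T_{N,\delta}$ is defined by $\frac{d\mathbf P^T_{N,\delta}}{d\mathbf P}(S)=\frac{\exp(\delta\sum_{i=1}^N\mathbf 1_{\{S_i\in T\mathbb Z\}})}{Z^T_{N,\delta}}$, with $Z^T_{N,\delta}$ the normalizing constant. *)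

From Stdlib Require Import Reals ZArith List.
Import ListNotations.
Open Scope R_scope.

(* A path of the simple random walk up to time N is encoded by its list of
   increments (each +1 or -1); under P all 2^N such lists have prob (1/2)^N. *)
Fixpoint srw_paths (n : nat) : list (list Z) :=
  match n with
  | O => [nil]
  | S m => flat_map (fun p => [(1%Z) :: p; (-1)%Z :: p]) (srw_paths m)
  end.

Definition pos (p : list Z) (n : nat) : Z := fold_right Z.add 0%Z (firstn n p).

Definition inTZ (T : nat) (x : Z) : bool := Z.eqb (Z.modulo x (Z.of_nat T)) 0%Z.

Definition loc_time (T N : nat) (p : list Z) : nat :=
  length (filter (fun i => inTZ T (pos p i)) (seq 1 N)).

Definition rsum {A : Type} (f : A -> R) (l : list A) : R :=
  fold_right Rplus 0 (map f l).

Definition polymer_mass (T N : nat) (delta : R) (A : list Z -> bool) : R :=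
  rsum (fun p => if A p then (/2) ^ N * exp (delta * INR (loc_time T N p)) else 0)
       (srw_paths N).

Definition partition_fn (T N : nat) (delta : R) : R :=
  polymer_mass T N delta (fun _ => true).

Definition polymer_prob (T N : nat) (delta : R) (A : list Z -> bool) : R :=
  polymer_mass T N delta A / partition_fn T N delta.

Definition mu (T N : nat) (p : list Z) : nat :=
  fold_left (fun acc n => if inTZ T (pos p n) then n else acc) (seq 0 (S N)) 0%nat.

From Pilot Require Import Defs.
From Stdlib Require Import Reals ZArith List Arith.
From Stdlib Require Import Lia Lra.
Import ListNotations.
Import Defs.  (* [pos] of the walk, not the [posreal] projection *)
Open Scope R_scope.

(* Write [Z_n] for the partition function and [Z°_n] for the pinned mass
   E[exp(δ L_n); S_n ∈ TZ].  Cutting a path at time [n] (Markov property,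
   together with the invariance of [TZ] under translation by an element of
   [TZ]) gives
     - mass{mu_{n+m} = n} <= Z°_n             (no contact after time n), and
     - Z°_n * Z_m <= Z_{n+m}                  (restart from a pinned site),
   hence P_N(mu_N = N - l) <= 1 / Z_l.  A quantitative lower bound
   Z_n >= c(δ) n^2 follows from Jensen, E[L_n] >= E|S_n| - 1 (a discrete
   Tanaka formula, since 0 ∈ TZ) and E|S_n| >= sqrt(n/24) (from the second
   and fourth moments of S_n).  Summing the bound 1/(c l^2) over l > l0
   telescopes to 1/(c l0), which is below any ε for l0 large. *)

Lemma rsum_cons {A : Type} (f : A -> R) x l : rsum f (x :: l) = f x + rsum f l.
Proof. reflexivity. Qed.

Lemma rsum_app {A : Type} (f : A -> R) l1 l2 :
  rsum f (l1 ++ l2) = rsum f l1 + rsum f l2.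
Proof.
  induction l1 as [|x l1 IH]; [unfold rsum; simpl; lra|].
  simpl. rewrite !rsum_cons, IH. lra.
Qed.

Lemma rsum_ext_in {A : Type} (f g : A -> R) l :
  (forall x, In x l -> f x = g x) -> rsum f l = rsum g l.
Proof.
  induction l as [|x l IH]; intros H; [reflexivity|].
  rewrite !rsum_cons, H by (left; auto). rewrite IH; auto.
  intros; apply H; right; auto.
Qed.

Lemma rsum_le_in {A : Type} (f g : A -> R) l :
  (forall x, In x l -> f x <= g x) -> rsum f l <= rsum g l.
Proof.
  induction l as [|x l IH]; intros H; [unfold rsum; simpl; lra|].
  rewrite !rsum_cons. apply Rplus_le_compat.
  - apply H; left; auto.
  - apply IH; intros; apply H; right; auto.
Qed.

Lemma rsum_plus {A : Type} (f g : A -> R) l :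
  rsum (fun x => f x + g x) l = rsum f l + rsum g l.
Proof. induction l; [unfold rsum; simpl; lra|]. rewrite !rsum_cons, IHl. lra. Qed.

Lemma rsum_scal {A : Type} (c : R) (f : A -> R) l :
  rsum (fun x => c * f x) l = c * rsum f l.
Proof. induction l; [unfold rsum; simpl; lra|]. rewrite !rsum_cons, IHl. lra. Qed.

Lemma rsum_const {A : Type} (c : R) (l : list A) : rsum (fun _ => c) l = c * INR (length l).
Proof.
  induction l; [unfold rsum; simpl; lra|].
  rewrite rsum_cons, IHl. simpl length. rewrite S_INR. lra.
Qed.

Lemma rsum_nonneg {A : Type} (f : A -> R) l :
  (forall x, In x l -> 0 <= f x) -> 0 <= rsum f l.
Proof.
  intros H. replace 0 with (rsum (fun _ : A => 0) l) by (rewrite rsum_const; lra).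
  apply rsum_le_in; auto.
Qed.

Lemma rsum_swap {A B : Type} (f : A -> B -> R) la lb :
  rsum (fun a => rsum (fun b => f a b) lb) la = rsum (fun b => rsum (fun a => f a b) la) lb.
Proof.
  induction la as [|a la IH].
  - unfold rsum at 1; simpl. rewrite (rsum_ext_in _ (fun _ => 0)) by reflexivity.
    rewrite rsum_const; lra.
  - rewrite rsum_cons, IH, <- rsum_plus. apply rsum_ext_in. intros. rewrite rsum_cons. lra.
Qed.

Lemma rsum_flat_map {A B : Type} (f : B -> R) (g : A -> list B) l :
  rsum f (flat_map g l) = rsum (fun x => rsum f (g x)) l.
Proof. induction l; [reflexivity|]. simpl. rewrite rsum_app, IHl, rsum_cons. reflexivity. Qed.

Lemma rsum_paths_S n f :
  rsum f (srw_paths (S n)) = rsum (fun p => f (1%Z :: p) + f ((-1)%Z :: p)) (srw_paths n).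
Proof.
  simpl. rewrite rsum_flat_map. apply rsum_ext_in. intros.
  rewrite !rsum_cons. unfold rsum; simpl; lra.
Qed.

Lemma length_of_path n p : In p (srw_paths n) -> length p = n.
Proof.
  revert p; induction n as [|n IH]; simpl; intros p H.
  - destruct H as [<-|[]]; reflexivity.
  - apply in_flat_map in H. destruct H as [q [Hq H]].
    destruct H as [<-|[<-|[]]]; simpl; f_equal; auto.
Qed.

Lemma number_of_paths n : length (srw_paths n) = (2 ^ n)%nat.
Proof.
  induction n as [|n IH]; [reflexivity|]. simpl. rewrite length_flat_map.
  assert (Hdouble : forall l : list (list Z),
            list_sum (map (fun p => length [1%Z :: p; (-1)%Z :: p]) l) = (2 * length l)%nat).
  { induction l; simpl; [reflexivity|]. simpl in IHl. rewrite IHl. lia. }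
  rewrite Hdouble, IH. reflexivity.
Qed.

Lemma rsum_paths_concat n m f :
  rsum f (srw_paths (n + m)) =
  rsum (fun a => rsum (fun b => f (a ++ b)) (srw_paths m)) (srw_paths n).
Proof.
  revert f; induction n as [|n IH]; intros f.
  - simpl plus. change (srw_paths 0) with [@nil Z]. rewrite rsum_cons.
    change (rsum (fun a : list Z => rsum (fun b => f (a ++ b)) (srw_paths m)) []) with 0.
    rewrite Rplus_0_r. reflexivity.
  - simpl plus. rewrite rsum_paths_S, IH, rsum_paths_S.
    apply rsum_ext_in. intros. rewrite <- rsum_plus. reflexivity.
Qed.

Definition expect (n : nat) (f : list Z -> R) : R :=
  rsum (fun p => (/2) ^ n * f p) (srw_paths n).

Lemma expect_const n c : expect n (fun _ => c) = c.
Proof.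
  unfold expect. rewrite rsum_const, number_of_paths, pow_INR.
  replace (INR 2) with 2 by (simpl; lra).
  replace ((/ 2) ^ n * c * 2 ^ n) with (c * ((/2)^n * 2^n)) by ring.
  rewrite <- Rpow_mult_distr, Rinv_l, pow1 by lra. ring.
Qed.

Lemma expect_plus n f g : expect n (fun p => f p + g p) = expect n f + expect n g.
Proof. unfold expect. rewrite <- rsum_plus. apply rsum_ext_in. intros; ring. Qed.

Lemma expect_scal n c f : expect n (fun p => c * f p) = c * expect n f.
Proof. unfold expect. rewrite <- rsum_scal. apply rsum_ext_in. intros; ring. Qed.

Lemma expect_le n f g :
  (forall p, In p (srw_paths n) -> f p <= g p) -> expect n f <= expect n g.
Proof.
  intros H. unfold expect. apply rsum_le_in. intros.
  apply Rmult_le_compat_l; [apply pow_le; lra | auto].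
Qed.

Lemma expect_ext n f g :
  (forall p, In p (srw_paths n) -> f p = g p) -> expect n f = expect n g.
Proof. intros H. unfold expect. apply rsum_ext_in. intros. rewrite H; auto. Qed.

Lemma expect_step n f :
  expect (S n) f = expect n (fun a => (f (a ++ [1%Z]) + f (a ++ [(-1)%Z])) / 2).
Proof.
  unfold expect. rewrite <- Nat.add_1_r, rsum_paths_concat. apply rsum_ext_in. intros a _.
  change (srw_paths 1) with [[1%Z]; [(-1)%Z]]. rewrite !rsum_cons, pow_add.
  unfold rsum; simpl. field.
Qed.

Lemma exp_expect_le n g : exp (expect n g) <= expect n (fun p => exp (g p)).
Proof.
  set (a := expect n g).
  apply Rle_trans with (expect n (fun p => exp a * (1 + (g p - a)))).
  - rewrite expect_scal, expect_plus, expect_const.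
    replace (expect n (fun p => g p - a)) with 0; [lra|].
    unfold Rminus. rewrite expect_plus, expect_const. fold a. ring.
  - apply expect_le. intros p _.
    replace (exp (g p)) with (exp a * exp (g p - a)) by (rewrite <- exp_plus; f_equal; ring).
    apply Rmult_le_compat_l; [apply Rlt_le, exp_pos | apply exp_ineq1_le].
Qed.

Lemma pos_app a b i : pos (a ++ b) i = (pos a i + pos b (i - length a))%Z.
Proof.
  unfold pos. rewrite firstn_app, fold_right_app.
  generalize (firstn (i - length a) b) as l.
  generalize (firstn i a) as l'. induction l'; intros l; simpl; [lia|]. rewrite IHl'. lia.
Qed.

Lemma pos_after_end a i : (length a <= i)%nat -> pos a i = pos a (length a).
Proof. intros H. unfold pos. rewrite !firstn_all2 by lia. reflexivity. Qed.

Lemma pos_app_before a b i : (i <= length a)%nat -> pos (a ++ b) i = pos a i.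
Proof.
  intros H. rewrite pos_app. replace (i - length a)%nat with 0%nat by lia.
  apply Z.add_0_r.
Qed.

Lemma pos_app_after a b n j : length a = n -> pos (a ++ b) (n + j) = (pos a n + pos b j)%Z.
Proof.
  intros Ha. rewrite pos_app, (pos_after_end a (n + j)) by lia. rewrite Ha.
  f_equal. f_equal. lia.
Qed.

Lemma pos_snoc a n x : length a = n -> pos (a ++ [x]) (S n) = (pos a n + x)%Z.
Proof.
  intros Ha. rewrite <- Nat.add_1_r, pos_app_after by auto. unfold pos at 2. simpl. lia.
Qed.

Lemma inTZ_0 T : inTZ T 0 = true.
Proof. reflexivity. Qed.

Lemma inTZ_shift T x y : (0 < T)%nat -> inTZ T x = true -> inTZ T (x + y) = inTZ T y.
Proof.
  unfold inTZ. intros HT Hx. apply Z.eqb_eq in Hx.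
  rewrite Z.add_mod, Hx, Z.add_0_l, Z.mod_mod by lia. reflexivity.
Qed.

Lemma count_shift (P : nat -> bool) s k m :
  length (filter P (seq (s + k) m)) = length (filter (fun j => P (s + j)%nat) (seq k m)).
Proof.
  revert k; induction m as [|m IH]; intros k; [reflexivity|]. simpl.
  replace (S (s + k)) with (s + S k)%nat by lia.
  destruct (P (s + k)%nat); simpl; rewrite IH; reflexivity.
Qed.

Lemma loc_time_app T n m a b : length a = n ->
  loc_time T (n + m) (a ++ b) =
  (loc_time T n a + length (filter (fun j => inTZ T (pos a n + pos b j)) (seq 1 m)))%nat.
Proof.
  intros Ha. unfold loc_time. rewrite seq_app, filter_app, length_app. f_equal.
  - f_equal. apply filter_ext_in. intros i Hi. apply in_seq in Hi.
    rewrite pos_app_before by lia. reflexivity.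
  - replace (1 + n)%nat with (n + 1)%nat by lia. rewrite count_shift. f_equal.
    apply filter_ext. intros j. rewrite pos_app_after by auto. reflexivity.
Qed.

Lemma mu_spec T N p :
  (mu T N p <= N)%nat /\ inTZ T (pos p (mu T N p)) = true /\
  forall k, (mu T N p < k <= N)%nat -> inTZ T (pos p k) = false.
Proof.
  unfold mu. induction N as [|N IH].
  - cbn [seq fold_left]. simpl. repeat split; [lia | intros; lia].
  - rewrite seq_S, fold_left_app.
    set (r := fold_left _ (seq 0 (S N)) 0%nat) in *. simpl fold_left.
    replace (0 + S N)%nat with (S N) by lia.
    destruct IH as [H1 [H2 H3]].
    destruct (inTZ T (pos p (S N))) eqn:E.
    + repeat split; [lia | exact E | intros; lia].
    + repeat split; [lia | exact H2 |]. intros k Hk.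
      destruct (Nat.eq_dec k (S N)); [subst; exact E | apply H3; lia].
Qed.

Lemma filter_all_false {A : Type} (f : A -> bool) l :
  (forall x, In x l -> f x = false) -> filter f l = [].
Proof.
  induction l as [|x l IH]; intros H; [reflexivity|]. simpl.
  rewrite H by (left; auto). apply IH. intros; apply H; right; auto.
Qed.

Definition pinned_mass (T n : nat) (delta : R) : R :=
  polymer_mass T n delta (fun a => inTZ T (pos a n)).

Lemma polymer_weight_nonneg n delta l : 0 <= (/2) ^ n * exp (delta * l).
Proof. apply Rmult_le_pos; [apply pow_le; lra | apply Rlt_le, exp_pos]. Qed.

(* If the last contact of a path of length n + m is at time n, then the
   first n steps form a pinned path and the last m steps contribute no
   contact; summing the m-step tail over its 2^m choices gives Z°_n. *)
Lemma mass_last_contact_le T n m delta :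
  polymer_mass T (n + m) delta (fun p => Nat.eqb (mu T (n + m) p) n) <= pinned_mass T n delta.
Proof.
  unfold pinned_mass, polymer_mass. rewrite rsum_paths_concat. apply rsum_le_in.
  intros a Ha. apply length_of_path in Ha.
  set (w := (/2) ^ n * exp (delta * INR (loc_time T n a))).
  apply Rle_trans with (rsum (fun _ => if inTZ T (pos a n) then (/2) ^ m * w else 0)
                          (srw_paths m)).
  - apply rsum_le_in. intros b _.
    destruct (Nat.eqb_spec (mu T (n + m) (a ++ b)) n) as [E|E].
    + destruct (mu_spec T (n + m) (a ++ b)) as [_ [Hcontact Hafter]].
      rewrite E in Hcontact, Hafter. rewrite pos_app_before in Hcontact by lia.
      assert (Hquiet : filter (fun j => inTZ T (pos a n + pos b j)) (seq 1 m) = []).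
      { apply filter_all_false. intros j Hj. apply in_seq in Hj.
        rewrite <- pos_app_after by auto. apply Hafter. lia. }
      rewrite Hcontact, loc_time_app, Hquiet by auto. simpl length.
      rewrite Nat.add_0_r. unfold w. rewrite pow_add. lra.
    + destruct (inTZ T (pos a n)); [|lra].
      apply Rmult_le_pos; [apply pow_le; lra | apply polymer_weight_nonneg].
  - rewrite rsum_const, number_of_paths, pow_INR. destruct (inTZ T (pos a n)); [|lra].
    replace (INR 2) with 2 by (simpl; lra).
    replace ((/ 2) ^ m * w * 2 ^ m) with (w * ((/ 2) ^ m * 2 ^ m)) by ring.
    rewrite <- Rpow_mult_distr, Rinv_l, pow1 by lra. lra.
Qed.

(* Supermultiplicativity: restarting from a pinned site the walk sees TZ
   exactly as from the origin, so Z°_n Z_m <= Z_{n+m}. *)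
Lemma pinned_mass_mult_le T n m delta : (0 < T)%nat ->
  pinned_mass T n delta * partition_fn T m delta <= partition_fn T (n + m) delta.
Proof.
  intros HT. unfold partition_fn, pinned_mass, polymer_mass. rewrite rsum_paths_concat.
  rewrite Rmult_comm, <- rsum_scal. apply rsum_le_in. intros a Ha. apply length_of_path in Ha.
  destruct (inTZ T (pos a n)) eqn:E.
  - rewrite Rmult_comm, <- rsum_scal. apply Req_le. apply rsum_ext_in. intros b _.
    rewrite loc_time_app by auto.
    erewrite filter_ext by (intros j; apply inTZ_shift; auto).
    fold (loc_time T m b). rewrite plus_INR, Rmult_plus_distr_l, exp_plus, pow_add. ring.
  - rewrite Rmult_0_r. apply rsum_nonneg. intros. apply polymer_weight_nonneg.
Qed.

Lemma prob_last_contact_le T N l delta : (0 < T)%nat -> (l <= N)%nat ->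
  0 < partition_fn T l delta -> 0 < partition_fn T N delta ->
  polymer_prob T N delta (fun p => Nat.eqb (mu T N p) (N - l)) <= / partition_fn T l delta.
Proof.
  intros HT Hl HZl HZN. set (n := (N - l)%nat).
  assert (HN : N = (n + l)%nat) by (unfold n; lia). clearbody n. subst N.
  replace (n + l - l)%nat with n by lia. unfold polymer_prob.
  pose proof (mass_last_contact_le T n l delta) as Hmass.
  pose proof (pinned_mass_mult_le T n l delta HT) as Hmult.
  apply Rmult_le_reg_r with (partition_fn T (n + l) delta); auto.
  apply Rmult_le_reg_l with (partition_fn T l delta); auto.
  unfold Rdiv. rewrite Rmult_assoc, Rinv_l, Rmult_1_r by lra.
  rewrite <- Rmult_assoc, Rinv_r, Rmult_1_l by lra. nra.
Qed.

Lemma second_moment n : expect n (fun p => IZR (pos p n) ^ 2) = INR n.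
Proof.
  induction n as [|n IH].
  - rewrite (expect_ext 0 _ (fun _ => 0)) by (intros; change (pos p 0) with 0%Z; simpl; ring).
    apply expect_const.
  - rewrite expect_step, (expect_ext n _ (fun a => IZR (pos a n) ^ 2 + 1)).
    + rewrite expect_plus, expect_const, IH, S_INR. ring.
    + intros a Ha. apply length_of_path in Ha. rewrite !pos_snoc, !plus_IZR by auto.
      simpl (IZR (-1)). field.
Qed.

Lemma fourth_moment n : expect n (fun p => IZR (pos p n) ^ 4) = 3 * INR n ^ 2 - 2 * INR n.
Proof.
  induction n as [|n IH].
  - rewrite (expect_ext 0 _ (fun _ => 0)) by (intros; change (pos p 0) with 0%Z; simpl; ring).
    rewrite expect_const. simpl; ring.
  - rewrite expect_step,
      (expect_ext n _ (fun a => IZR (pos a n) ^ 4 + 6 * IZR (pos a n) ^ 2 + 1)).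
    + rewrite !expect_plus, expect_scal, expect_const, IH, second_moment, S_INR. ring.
    + intros a Ha. apply length_of_path in Ha. rewrite !pos_snoc, !plus_IZR by auto.
      simpl (IZR (-1)). field.
Qed.

Lemma square_le_abs_quartic x M : 0 < M -> x ^ 2 <= M * Rabs x + x ^ 4 / M ^ 2.
Proof.
  intros HM. set (y := Rabs x). assert (Hy : 0 <= y) by apply Rabs_pos.
  assert (Hx2 : x ^ 2 = y ^ 2) by (unfold y; rewrite pow2_abs; reflexivity).
  replace (x ^ 4) with ((y ^ 2) ^ 2) by (rewrite <- Hx2; ring). rewrite Hx2.
  destruct (Rle_lt_dec y M).
  - assert (0 <= (y ^ 2) ^ 2 / M ^ 2).
    { apply Rmult_le_pos; [apply pow2_ge_0 | apply Rlt_le, Rinv_0_lt_compat; nra]. }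
    nra.
  - assert (M ^ 2 <= y ^ 2) by nra.
    assert (y ^ 2 <= (y ^ 2) ^ 2 / M ^ 2).
    { apply Rmult_le_reg_r with (M ^ 2); [nra|].
      unfold Rdiv. rewrite Rmult_assoc, Rinv_l by nra. nra. }
    nra.
Qed.

(* E|S_n| >= sqrt(n / 24): take M = sqrt(6n) above and use the moments. *)
Lemma mean_abs_pos_lower n : (1 <= n)%nat ->
  INR n / 24 <= expect n (fun p => IZR (Z.abs (pos p n))) ^ 2.
Proof.
  intros Hn. set (e := expect n (fun p => IZR (Z.abs (pos p n)))).
  assert (He0 : 0 <= e).
  { unfold e. rewrite <- (expect_const n 0). apply expect_le. intros. apply IZR_le. lia. }
  assert (HN : 1 <= INR n) by (apply (le_INR 1); lia).
  set (M := sqrt (6 * INR n)).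
  assert (HM2 : M ^ 2 = 6 * INR n) by (unfold M; rewrite pow2_sqrt; lra).
  assert (HM : 0 < M) by (apply sqrt_lt_R0; lra).
  assert (Hsplit : INR n <= M * e + (3 * INR n ^ 2 - 2 * INR n) / M ^ 2).
  { rewrite <- (second_moment n) at 1.
    replace ((3 * INR n ^ 2 - 2 * INR n) / M ^ 2)
      with (/ M ^ 2 * (3 * INR n ^ 2 - 2 * INR n)) by (unfold Rdiv; ring).
    unfold e. rewrite <- fourth_moment, <- !expect_scal, <- expect_plus.
    apply expect_le. intros p _. rewrite abs_IZR.
    replace (/ M ^ 2 * IZR (pos p n) ^ 4) with (IZR (pos p n) ^ 4 / M ^ 2) by (unfold Rdiv; ring).
    apply square_le_abs_quartic; auto. }
  assert (Hquartic : (3 * INR n ^ 2 - 2 * INR n) / M ^ 2 <= INR n / 2).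
  { rewrite HM2. apply Rmult_le_reg_r with (6 * INR n); [lra|].
    unfold Rdiv. rewrite Rmult_assoc, Rinv_l by lra. nra. }
  assert (HMe : INR n / 2 <= M * e) by lra.
  assert (HMe2 : (INR n / 2) ^ 2 <= M ^ 2 * e ^ 2) by nra.
  rewrite HM2 in HMe2. nra.
Qed.

Definition zero_count (n : nat) (p : list Z) : nat :=
  length (filter (fun i => Z.eqb (pos p i) 0) (seq 0 n)).

Lemma abs_step s :
  IZR (Z.abs (s + 1)) + IZR (Z.abs (s + -1)) = 2 * IZR (Z.abs s) + 2 * (if Z.eqb s 0 then 1 else 0).
Proof.
  rewrite <- !plus_IZR. destruct (Z.eqb_spec s 0).
  - subst. simpl. lra.
  - replace (Z.abs (s + 1) + Z.abs (s + -1))%Z with (2 * Z.abs s)%Z by lia.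
    rewrite mult_IZR. simpl. lra.
Qed.

Lemma zero_count_snoc a n x : length a = n ->
  zero_count (S n) (a ++ [x]) = (zero_count n a + (if Z.eqb (pos a n) 0 then 1 else 0))%nat.
Proof.
  intros Ha. unfold zero_count. rewrite seq_S, filter_app, length_app. f_equal.
  - f_equal. apply filter_ext_in. intros i Hi. apply in_seq in Hi.
    rewrite pos_app_before by lia. reflexivity.
  - simpl. rewrite pos_app_before by lia. destruct (pos a n =? 0)%Z; reflexivity.
Qed.

(* Discrete Tanaka formula: |S_n| - (number of zeros before n) is a martingale. *)
Lemma tanaka n :
  expect n (fun p => IZR (Z.abs (pos p n))) = expect n (fun p => INR (zero_count n p)).
Proof.
  induction n as [|n IH]; [apply expect_ext; reflexivity|].
  rewrite !expect_step.
  rewrite (expect_ext n _ (fun a => IZR (Z.abs (pos a n)) + (if Z.eqb (pos a n) 0 then 1 else 0))).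
  - rewrite (expect_ext n (fun a => (INR (zero_count (S n) (a ++ [1%Z]))
                                     + INR (zero_count (S n) (a ++ [(-1)%Z]))) / 2)
               (fun a => INR (zero_count n a) + (if Z.eqb (pos a n) 0 then 1 else 0))).
    + rewrite !expect_plus, IH. reflexivity.
    + intros a Ha. apply length_of_path in Ha. rewrite !zero_count_snoc, !plus_INR by auto.
      destruct (pos a n =? 0)%Z; simpl; field.
  - intros a Ha. apply length_of_path in Ha. rewrite !pos_snoc, abs_step by auto. field.
Qed.

Lemma count_mono {A : Type} (f g : A -> bool) l :
  (forall x, f x = true -> g x = true) -> (length (filter f l) <= length (filter g l))%nat.
Proof.
  intros H. induction l as [|x l IH]; [simpl; lia|]. simpl.
  destruct (f x) eqn:Ef; [rewrite (H x Ef); simpl; lia|].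
  destruct (g x); simpl; lia.
Qed.

(* Since 0 ∈ TZ, every zero of the walk at a time in [1, n) is a contact;
   the zero at time 0 is the only one not counted by [loc_time]. *)
Lemma zero_count_le T n p : (zero_count n p <= 1 + loc_time T n p)%nat.
Proof.
  unfold zero_count, loc_time. destruct n as [|n]; [simpl; lia|].
  change (seq 0 (S n)) with (0%nat :: seq 1 n). rewrite seq_S, filter_app, length_app.
  assert (Hzeros : (length (filter (fun i => (pos p i =? 0)%Z) (seq 1 n))
                    <= length (filter (fun i => inTZ T (pos p i)) (seq 1 n)))%nat).
  { apply count_mono. intros x Hx. apply Z.eqb_eq in Hx. rewrite Hx. apply inTZ_0. }
  simpl filter at 1. destruct (pos p 0 =? 0)%Z; simpl length; lia.
Qed.

Lemma mean_local_time_lower T n :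
  expect n (fun p => IZR (Z.abs (pos p n))) - 1 <= expect n (fun p => INR (loc_time T n p)).
Proof.
  rewrite tanaka.
  replace (expect n (fun p => INR (loc_time T n p)))
    with (expect n (fun p => 1 + INR (loc_time T n p)) - 1)
    by (rewrite expect_plus, expect_const; ring).
  apply Rplus_le_compat_r, expect_le. intros p _.
  replace (1 + INR (loc_time T n p)) with (INR (1 + loc_time T n p))
    by (rewrite plus_INR; simpl; ring).
  apply le_INR, zero_count_le.
Qed.

Lemma exp_le_compat x y : x <= y -> exp x <= exp y.
Proof.
  intros [Hlt | ->]; [apply Rlt_le, exp_increasing, Hlt | apply Rle_refl].
Qed.

Lemma quartic_le_exp y : 0 <= y -> (y / 4) ^ 4 <= exp y.
Proof.
  intros Hy. replace y with (y / 4 + y / 4 + y / 4 + y / 4) at 2 by field.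
  rewrite !exp_plus.
  replace (exp (y / 4) * exp (y / 4) * exp (y / 4) * exp (y / 4)) with (exp (y / 4) ^ 4) by ring.
  pose proof (exp_ineq1_le (y / 4)). apply pow_incr; lra.
Qed.

Definition growth_const (delta : R) : R := exp (- delta) * (delta / 4) ^ 4 / 576.

Lemma growth_const_pos delta : 0 < delta -> 0 < growth_const delta.
Proof.
  intros Hd. unfold growth_const.
  apply Rmult_lt_0_compat; [apply Rmult_lt_0_compat; [apply exp_pos | apply pow_lt] | ]; lra.
Qed.

(* Z_n >= exp(δ E[L_n]) >= exp(δ (E|S_n| - 1)) >= c(δ) n^2. *)
Lemma partition_fn_lower T n delta : 0 < delta -> (1 <= n)%nat ->
  growth_const delta * INR n ^ 2 <= partition_fn T n delta.
Proof.
  intros Hd Hn.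
  set (e := expect n (fun p => IZR (Z.abs (pos p n)))).
  assert (He0 : 0 <= e).
  { unfold e. rewrite <- (expect_const n 0). apply expect_le. intros. apply IZR_le. lia. }
  assert (He4 : INR n ^ 2 / 576 <= e ^ 4).
  { pose proof (mean_abs_pos_lower n Hn) as He2. fold e in He2.
    replace (e ^ 4) with ((e ^ 2) ^ 2) by ring.
    pose proof (pos_INR n). nra. }
  assert (Hjensen : exp (delta * (e - 1)) <= partition_fn T n delta).
  { replace (partition_fn T n delta)
      with (expect n (fun p => exp (delta * INR (loc_time T n p)))) by reflexivity.
    eapply Rle_trans; [|apply exp_expect_le]. rewrite expect_scal.
    apply exp_le_compat, Rmult_le_compat_l; [lra | apply mean_local_time_lower]. }
  eapply Rle_trans; [|exact Hjensen].
  replace (delta * (e - 1)) with (- delta + delta * e) by ring. rewrite exp_plus.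
  unfold growth_const.
  replace (exp (- delta) * (delta / 4) ^ 4 / 576 * INR n ^ 2)
    with (exp (- delta) * ((delta / 4) ^ 4 * (INR n ^ 2 / 576))) by field.
  apply Rmult_le_compat_l; [apply Rlt_le, exp_pos|].
  eapply Rle_trans; [|apply quartic_le_exp; nra].
  replace ((delta * e / 4) ^ 4) with ((delta / 4) ^ 4 * e ^ 4) by field.
  apply Rmult_le_compat_l; [apply pow_le; lra | exact He4].
Qed.

Lemma rsum_seq_indicator x N w a k : (x <= N)%nat -> (1 <= a)%nat -> (a + k <= N + 1)%nat ->
  rsum (fun l => if Nat.eqb x (N - l) then w else 0) (seq a k) =
  if (Nat.leb a (N - x) && Nat.ltb (N - x) (a + k))%bool then w else 0.
Proof.
  intros Hx. revert a. induction k as [|k IH]; intros a Ha Hk.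
  - simpl. destruct (Nat.leb_spec a (N - x)); destruct (Nat.ltb_spec (N - x) (a + 0));
      simpl; unfold rsum; simpl; try lra; lia.
  - simpl seq. rewrite rsum_cons, IH by lia.
    destruct (Nat.eqb_spec x (N - a)); destruct (Nat.leb_spec a (N - x));
      destruct (Nat.ltb_spec (N - x) (a + S k)); destruct (Nat.leb_spec (S a) (N - x));
      destruct (Nat.ltb_spec (N - x) (S a + k)); simpl; try lra; lia.
Qed.

Lemma mu_lt_decomposition T N delta l0 :
  polymer_prob T N delta (fun p => Nat.ltb (mu T N p) (N - l0))
  = rsum (fun l => polymer_prob T N delta (fun p => Nat.eqb (mu T N p) (N - l)))
         (seq (S l0) (N - l0)).
Proof.
  unfold polymer_prob, Rdiv.
  rewrite (rsum_ext_in _ (fun l => / partition_fn T N delta *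
             polymer_mass T N delta (fun p => Nat.eqb (mu T N p) (N - l)))) by (intros; ring).
  rewrite rsum_scal, Rmult_comm. f_equal.
  unfold polymer_mass. rewrite rsum_swap. apply rsum_ext_in. intros p _.
  destruct (mu_spec T N p) as [Hmu _].
  destruct (Nat.lt_ge_cases l0 N).
  - rewrite rsum_seq_indicator by lia.
    destruct (Nat.ltb_spec (mu T N p) (N - l0)); destruct (Nat.leb_spec (S l0) (N - mu T N p));
      destruct (Nat.ltb_spec (N - mu T N p) (S l0 + (N - l0))); simpl; try reflexivity; lia.
  - replace (N - l0)%nat with 0%nat by lia. simpl seq.
    destruct (Nat.ltb_spec (mu T N p) 0); [lia | reflexivity].
Qed.

(* sum_{l = a+1}^{a+k} C / l^2 <= C / a - C / (a + k), from 1/l^2 <= 1/(l-1) - 1/l. *)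
Lemma inverse_square_telescope C k a : 0 <= C -> (1 <= a)%nat ->
  rsum (fun l => C / INR l ^ 2) (seq (S a) k) <= C / INR a - C / INR (a + k).
Proof.
  intros HC. revert a. induction k as [|k IH]; intros a Ha.
  - simpl. rewrite Nat.add_0_r. unfold rsum; simpl. lra.
  - simpl seq. rewrite rsum_cons. specialize (IH (S a) ltac:(lia)).
    replace (a + S k)%nat with (S a + k)%nat by lia.
    assert (HA : 1 <= INR a) by (apply (le_INR 1); lia). rewrite S_INR in *.
    assert (C / (INR a + 1) ^ 2 <= C / INR a - C / (INR a + 1)).
    { replace (C / INR a - C / (INR a + 1)) with (C * / (INR a * (INR a + 1))) by (field; lra).
      unfold Rdiv. apply Rmult_le_compat_l; auto. apply Rinv_le_contravar; nra. }
    lra.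
Qed.

Section TailBound.

Variables (T : nat) (delta : R).
Hypotheses (HT : (0 < T)%nat) (Hdelta : 0 < delta).

Let C : R := / growth_const delta.

Lemma partition_fn_pos n : (1 <= n)%nat -> 0 < partition_fn T n delta.
Proof.
  intros Hn. eapply Rlt_le_trans; [|apply partition_fn_lower; auto].
  apply Rmult_lt_0_compat; [apply growth_const_pos; auto|].
  apply pow_lt, (lt_INR 0); lia.
Qed.

Lemma prob_last_contact_quadratic N l : (1 <= l <= N)%nat ->
  polymer_prob T N delta (fun p => Nat.eqb (mu T N p) (N - l)) <= C / INR l ^ 2.
Proof.
  intros Hl. eapply Rle_trans;
    [apply prob_last_contact_le; auto; try lia; apply partition_fn_pos; lia|].
  unfold C, Rdiv. rewrite <- Rinv_mult. apply Rinv_le_contravar.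
  - apply Rmult_lt_0_compat; [apply growth_const_pos; auto | apply pow_lt, (lt_INR 0); lia].
  - apply partition_fn_lower; auto; lia.
Qed.

Lemma last_contact_tail_le N l0 : (1 <= l0)%nat ->
  rsum (fun l => polymer_prob T N delta (fun p => Nat.eqb (mu T N p) (N - l)))
       (seq (S l0) (N - l0)) <= C / INR l0.
Proof.
  intros Hl0. assert (HC : 0 < C) by (apply Rinv_0_lt_compat, growth_const_pos; auto).
  apply Rle_trans with (rsum (fun l => C / INR l ^ 2) (seq (S l0) (N - l0))).
  - apply rsum_le_in. intros l Hl. apply in_seq in Hl.
    apply prob_last_contact_quadratic. lia.
  - eapply Rle_trans; [apply inverse_square_telescope; [lra | lia]|].
    assert (0 <= C / INR (l0 + (N - l0))).
    { apply Rmult_le_pos; [lra|]. apply Rlt_le, Rinv_0_lt_compat, (lt_INR 0); lia. }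
    lra.
Qed.

End TailBound.

Theorem mainTheorem17 (delta : R) (Tseq : nat -> nat)
  (hdelta : 0 < delta)
  (hT : forall N, (0 < Tseq N)%nat /\ Nat.Even (Tseq N)) :
  forall eps : R, 0 < eps ->
  exists l0 : nat, forall N : nat,
    polymer_prob (Tseq N) N delta (fun p => Nat.ltb (mu (Tseq N) N p) (N - l0))
      = rsum (fun l => polymer_prob (Tseq N) N delta
                         (fun p => Nat.eqb (mu (Tseq N) N p) (N - l)))
             (seq (S l0) (N - l0))
    /\
    polymer_prob (Tseq N) N delta (fun p => Nat.ltb (mu (Tseq N) N p) (N - l0))
      <= eps.
Proof.
  intros eps Heps.
  set (C := / growth_const delta).
  destruct (INR_unbounded (C / eps)) as [n Hn].
  assert (Hl0 : C / INR (S n) <= eps).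
  { rewrite S_INR in *. pose proof (pos_INR n).
    apply Rmult_le_reg_r with (INR n + 1); [lra|]. unfold Rdiv.
    rewrite Rmult_assoc, Rinv_l, Rmult_1_r by lra.
    apply Rmult_le_reg_r with (/ eps); [apply Rinv_0_lt_compat; lra|].
    replace (eps * (INR n + 1) * / eps) with (INR n + 1) by (field; lra). lra. }
  exists (S n). intros N. rewrite mu_lt_decomposition. split; [reflexivity|].
  eapply Rle_trans; [apply last_contact_tail_le; auto; [apply hT | lia] | exact Hl0].
Qed.
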